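(* A unicyclic graph that has a vertex of degree at least four, or that has a vertex of degree three not contained in its cycle, is not in $\mathcal{G}^{\rm SSP}$.
   Context: All graphs are finite, simple, undirected. A unicyclic graph is a connected graph containing exactly one cycle. For a graph $G$ on $\{1,\ldots,n\}$, $\mathcal{S}(G)$ is the set of real symmetric $n\times n$ matrices $A=(a_{ij})$ with $a_{ij}\neq0$ iff $\{i,j\}\in E(G)$ for $i\neq j$ (diagonal arbitrary). A real symmetric $A$ has the strong spectral property (SSP) if the only real symmetric $X$ with $A\circ X=0$, $I\circ X=0$, $AX-XA=0$ is $X=0$ ($\circ$ = entrywise product). $\mathcal{G}^{\rm SSP}$ is the set of graphs $G$ such that every matrix in $\mathcal{S}(G)$ has the SSP. *)

From HB Require Import structures.
From mathcomp Require Import all_boot all_order all_algebra.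
From mathcomp Require Import reals.
Set Implicit Arguments. Unset Strict Implicit. Unset Printing Implicit Defensive.
Import Order.TTheory GRing.Theory Num.Theory.
Local Open Scope ring_scope.

Definition simple_graph n (e : rel 'I_n) : Prop :=
  (forall i j, e i j = e j i) /\ (forall i, e i i = false).

Definition connected_graph n (e : rel 'I_n) : Prop :=
  forall u v, connect e u v.

Definition degree n (e : rel 'I_n) (v : 'I_n) : nat := #|[set u | e v u]|.

Definition is_cycle n (e : rel 'I_n) (s : seq 'I_n) : Prop :=
  [/\ (3 <= size s)%N, uniq s & path.cycle e s].

Definition cycle_edges n (s : seq 'I_n) : {set 'I_n * 'I_n} :=
  [set p | (p \in zip s (rot 1 s)) || ((p.2, p.1) \in zip s (rot 1 s))].

Definition unicyclic n (e : rel 'I_n) : Prop :=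
  connected_graph e /\
  exists s, is_cycle e s /\
    forall t, is_cycle e t -> cycle_edges t = cycle_edges s.

Definition in_SG (R : realType) n (e : rel 'I_n) (A : 'M[R]_n) : Prop :=
  A^T = A /\ forall i j, i != j -> (A i j != 0) = e i j.

Definition SSP (R : realType) n (A : 'M[R]_n) : Prop :=
  forall X : 'M[R]_n, X^T = X ->
    (forall i j, A i j * X i j = 0) ->
    (forall i, X i i = 0) ->
    A *m X = X *m A -> X = 0.

Definition in_GSSP (R : realType) n (e : rel 'I_n) : Prop :=
  forall A : 'M[R]_n, in_SG e A -> SSP A.

From mathcomp Require Import all_boot all_order all_algebra reals.
Set Implicit Arguments. Unset Strict Implicit. Unset Printing Implicit Defensive.
Import GRing.Theory Num.Theory.

(* If A in S(G) has null vectors x and y with disjoint supports and no edge of G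
   between the supports, then X = x y^T + y x^T is a nonzero symmetric matrix with
   zero diagonal, A o X = 0 and AX = XA = 0, so A lacks the SSP. Given a vertex c,
   a vector that is constant on the components of G - c, vanishes at c and has
   sum_j w(c,j) x_j = 0 for the off-diagonal weights w is killed by A once the
   diagonal of A is chosen row by row. In a unicyclic graph a component of G - v
   contains at most two neighbours of v, and only if v lies on the cycle; weights
   -1 and 1 on the two edges from v then make the weighted sum vanish. A vertex of
   degree >= 4 thus yields two such vectors centred at v on disjoint unions of
   components. A vertex v of degree 3 off the cycle yields one centred at v on two
   branches not leading to the cycle, and one centred at the cycle vertex r nearest
   to v, supported on the component of G - r containing the rest of the cycle. *)

Lemma zip_rot1_next (T : eqType) (s : seq T) x y :
  uniq s -> (x, y) \in zip s (rot 1 s) -> y = next s x.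
Proof.
case: s => [|z s] // s_uniq /(nthP (x, x))[i]; rewrite size_zip size_rot minnn.
move=> lt_i; rewrite nth_zip ?size_rot // => -[<- <-].
rewrite next_nth mem_nth // index_uniq // rot1_cons nth_rcons.
have [lt_is|gt_is|->] := ltngtP i (size s).
- exact: set_nth_default.
- by rewrite ltnS leqNgt gt_is in lt_i.
- by rewrite nth_default.
Qed.

Lemma mem_zip_fst (S T : eqType) (s : seq S) (t : seq T) x y :
  (x, y) \in zip s t -> x \in s.
Proof.
elim: s t => [|a s IH] [|b t] //=; rewrite !inE => /orP[/eqP[-> _] | /IH ->].
  by rewrite eqxx.
by rewrite orbT.
Qed.

Lemma mem_zip_snd (S T : eqType) (s : seq S) (t : seq T) x y :
  (x, y) \in zip s t -> y \in t.
Proof.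
elim: s t => [|a s IH] [|b t] //=; rewrite !inE => /orP[/eqP[_ ->] | /IH ->].
  by rewrite eqxx.
by rewrite orbT.
Qed.

Lemma mem_cycle_edges n (s : seq 'I_n) i j : (i, j) \in cycle_edges s -> i \in s.
Proof.
by rewrite inE => /orP[/mem_zip_fst // | /mem_zip_snd]; rewrite mem_rot.
Qed.

Lemma cycle_edgesC n (s : seq 'I_n) i j :
  ((i, j) \in cycle_edges s) = ((j, i) \in cycle_edges s).
Proof. by rewrite !inE orbC. Qed.

Lemma cycle_edge_next_prev n (s : seq 'I_n) i j : uniq s ->
  (i, j) \in cycle_edges s -> (j == next s i) || (j == prev s i).
Proof.
move=> s_uniq; rewrite inE => /orP[] /(zip_rot1_next s_uniq) /= ->.
  by rewrite eqxx.
by rewrite prev_next // eqxx orbT.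
Qed.

Definition induced n (e : rel 'I_n) (P : pred 'I_n) : rel 'I_n :=
  [rel i j | [&& e i j, P i & P j]].
Arguments induced {n} e P i j /.

Definition avoid n (e : rel 'I_n) (c : 'I_n) : rel 'I_n := induced e (predC1 c).
Arguments avoid {n} e c i j /.

Section InducedSubgraph.
Variables (n : nat) (e : rel 'I_n).
Hypothesis e_sym : symmetric e.

Lemma connect_induced_sym (P : pred 'I_n) : connect_sym (induced e P).
Proof. by apply: sym_connect_sym => i j; rewrite /= e_sym [P i && _]andbC. Qed.

Lemma path_induced_all (P : pred 'I_n) u l : path (induced e P) u l -> all P l.
Proof. by elim: l u => //= j l IH u /andP[/and3P[_ _ ->] /IH]. Qed.

Lemma connect_induced_mem (P : pred 'I_n) u j :
  P u -> connect (induced e P) u j -> P j.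
Proof.
move=> Pu /connectP[l /path_induced_all/allP Pl ->].
by case: l Pl => //= k l Pl; apply/Pl/mem_last.
Qed.

Lemma connect_induced_sub (P Q : pred 'I_n) u j : subpred P Q ->
  connect (induced e P) u j -> connect (induced e Q) u j.
Proof.
move=> PQ; apply: connect_sub => i k /and3P[eik Pi Pk].
by apply: connect1; rewrite /= eik !PQ.
Qed.

Lemma connect_induced_restrict (P Q : pred 'I_n) u j :
  (forall k, connect (induced e P) u k -> Q k) ->
  connect (induced e P) u j -> connect (induced e Q) u j.
Proof.
move=> compQ /connectP[l ul ->]; apply/connectP; exists l => //.
have allQ : all Q (u :: l) by apply/allP => k /(path_connect ul)/compQ.
by apply: sub_in_path allQ ul => i k Qi Qk /and3P[eik _ _]; apply/and3P.
Qed.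

Lemma connect_avoid_edge c i j :
  e i j -> i != c -> j != c -> connect (avoid e c) i j.
Proof. by move=> eij ic jc; apply: connect1; rewrite /= eij ic jc. Qed.

Lemma path_first_exit (P : pred 'I_n) u l :
  path e u l -> P u -> ~~ P (last u l) ->
  exists y z, [/\ connect (induced e P) u y, P y, ~~ P z & e y z].
Proof.
elim: l u => [|k l IH] u /=; first by move=> _ ->.
move=> /andP[euk kl] Pu; have [Pk | nPk] := boolP (P k); last first.
  by exists u, k; rewrite connect0.
case/(IH k kl Pk) => y [z [ky Py nPz eyz]]; exists y, z; split=> //.
by apply: connect_trans ky; apply: connect1; rewrite /= euk Pu Pk.
Qed.

End InducedSubgraph.

Section Cycle.
Variables (n : nat) (e : rel 'I_n).
Hypothesis e_sym : symmetric e.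
Hypothesis e_irr : irreflexive e.
Variable s : seq 'I_n.
Hypothesis s_cycle : is_cycle e s.

Lemma cycle_nbrs_linked r : r \in s ->
  exists p q, [/\ p \in s, e r p, e r q, p != q & connect (avoid e r) p q].
Proof.
case: s_cycle => size_s uniq_s cycle_s /rot_to[i t s_rot].
have : [/\ 3 <= size (r :: t), uniq (r :: t) & cycle e (r :: t)].
  by rewrite -s_rot size_rot rot_uniq rot_cycle.
have mem_t k : k \in t -> k \in s.
  by move=> kt; rewrite -(mem_rot i) s_rot inE kt orbT.
case: t s_rot mem_t => [|p [|z t]] s_rot mem_t [] //= _ uniq_rt.
rewrite rcons_path /= => /and4P[erp epz zt eqr].
exists p, (last z t); split.
- by apply: mem_t; rewrite mem_head.
- by [].
- by rewrite e_sym.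
- by apply: contraTneq uniq_rt => ->; rewrite /= mem_last andbF.
apply/connectP; exists (z :: t) => //.
have avoid_r : all (predC1 r) (p :: z :: t).
  by apply/allP => k kt; apply: contraTneq uniq_rt => <-; rewrite /= kt.
apply: (sub_in_path (e := e)) avoid_r _; last by rewrite /= epz.
by move=> j k jr kr ejk; apply/and3P.
Qed.

Hypothesis s_unique : forall t, is_cycle e t -> cycle_edges t = cycle_edges s.

Lemma cycle_edge_of_avoid_path x y z :
  e x y -> e x z -> z != y -> connect (avoid e x) z y -> (x, y) \in cycle_edges s.
Proof.
move=> exy exz zy /connectP[l zl y_last].
case: (shortenP zl) y_last => t zt uniq_zt _ y_last {l zl}.
have zx : z != x by apply: contraTneq exz => ->; rewrite e_irr.
have tx : x \notin z :: t.
  by rewrite inE negb_or eq_sym zx; apply/negP => /(allP (path_induced_all zt))/negP.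
have t_cycle : is_cycle e (x :: z :: t).
  split => //=.
  - by case: t y_last {zt uniq_zt tx} => [|k t] //= zy_eq; rewrite zy_eq eqxx in zy.
  - by rewrite -/(uniq (z :: t)) uniq_zt andbT.
  rewrite rcons_path /= exz -y_last e_sym exy andbT.
  by apply: sub_path zt => i j /and3P[].
rewrite -(s_unique t_cycle) cycle_edgesC inE; apply/orP; left.
rewrite rot1_cons (lastI x (z :: t)) zip_rcons ?size_belast //.
by rewrite mem_rcons /= -y_last mem_head.
Qed.

Lemma no_three_linked_nbrs v a b c : e v a -> e v b -> e v c ->
  a != b -> a != c -> b != c ->
  connect (avoid e v) a b -> connect (avoid e v) a c -> False.
Proof.
move=> eva evb evc ab ac bc lab lac.
have [_ uniq_s _] := s_cycle.
have ba : b != a by rewrite eq_sym.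
have lba : connect (avoid e v) b a by rewrite (connect_induced_sym e_sym).
have /(cycle_edge_next_prev uniq_s) := cycle_edge_of_avoid_path eva evb ba lba.
have /(cycle_edge_next_prev uniq_s) := cycle_edge_of_avoid_path evb eva ab lab.
have /(cycle_edge_next_prev uniq_s) := cycle_edge_of_avoid_path evc eva ac lac.
move=> /orP[]/eqP ec /orP[]/eqP eb /orP[]/eqP ea;
  by move: ab ac bc; rewrite ea eb ec eqxx.
Qed.

Lemma off_cycle_nbrs_unlinked v a b : v \notin s -> e v a -> e v b -> a != b ->
  ~~ connect (avoid e v) a b.
Proof.
move=> vs eva evb ab; apply: contra vs => lab.
exact: mem_cycle_edges (cycle_edge_of_avoid_path evb eva ab lab).
Qed.

Lemma off_cycle_vertex_separated v : connected_graph e -> v \notin s ->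
  exists r p q, [/\ r != v, e r p, e r q, p != q & connect (avoid e r) p q]
    /\ ~~ connect (avoid e r) p v.
Proof.
move=> e_conn vs; have [size_s _ _] := s_cycle.
have s0s : nth v s 0 \in s by apply: mem_nth; apply: leq_trans size_s.
have [l vl s0_last] := connectP (e_conn v (nth v s 0)).
have := path_first_exit (P := fun j => j \notin s) vl vs.
rewrite -s0_last negbK => /(_ s0s) [y [r [vy ys /negPn rs eyr]]].
have [p [q [ps erp erq pq lpq]]] := cycle_nbrs_linked rs.
exists r, p, q; split; first by split=> //; apply: contraTneq rs => ->.
apply/negP => lpv.
have lvy : connect (avoid e r) v y.
  by apply: connect_induced_sub vy => j /=; apply: contraNneq => ->.
have py : p != y by apply: contraTneq ps => ->.
have ery : e r y by rewrite e_sym.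
have := cycle_edge_of_avoid_path ery erp py (connect_trans lpv lvy).
by rewrite cycle_edgesC => /mem_cycle_edges; apply/negP.
Qed.

End Cycle.

Section NullPair.
Variables (R : realType) (n : nat).
Local Open Scope ring_scope.

Lemma null_pair_not_SSP (A : 'M[R]_n) (x y : 'I_n -> R) :
  A^T = A -> A *m \col_i x i = 0 -> A *m \col_i y i = 0 ->
  (forall i j, (i == j) || (A i j != 0) -> x i * y j = 0) ->
  (exists i, x i != 0) -> (exists j, y j != 0) -> ~ SSP A.
Proof.
move=> A_sym Ax Ay xy [i xi] [j yj] A_SSP.
set cx := \col_i x i in Ax; set cy := \col_i y i in Ay.
pose X := cx *m cy^T + cy *m cx^T.
have XE k l : X k l = x k * y l + y k * x l by rewrite !mxE !big_ord1 !mxE.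
have trA (z : 'cV_n) : z^T *m A = (A *m z)^T by rewrite trmx_mul A_sym.
have xy_diag k : x k * y k = 0 by apply: xy; rewrite eqxx.
have yi : y i = 0 by apply/eqP; move/eqP: (xy_diag i); rewrite mulf_eq0 (negbTE xi).
suff /matrixP/(_ i j)/eqP : X = 0.
  by rewrite XE mxE yi mul0r addr0 mulf_eq0 (negbTE xi) (negbTE yj).
apply: A_SSP.
- by rewrite linearD /= !trmx_mul !trmxK addrC.
- move=> k l; rewrite XE; have [->|Akl] := eqVneq (A k l) 0; first by rewrite mul0r.
  have Alk : A l k != 0 by rewrite -A_sym mxE in Akl.
  by rewrite (xy k l) ?Akl ?orbT // [y k * _]mulrC (xy l k) ?Alk ?orbT // addr0 mulr0.
- by move=> k; rewrite XE xy_diag mulrC xy_diag addr0.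
- rewrite mulmxDr mulmxDl !mulmxA Ax Ay -!mulmxA !trA Ax Ay.
  by rewrite trmx0 !mul0mx !mulmx0.
Qed.

End NullPair.

Section Weights.
Variables (R : realType) (n : nat) (e : rel 'I_n).
Local Open Scope ring_scope.
Hypothesis e_sym : symmetric e.
Hypothesis e_irr : irreflexive e.
Variable w : 'I_n -> 'I_n -> R.
Hypothesis w_sym : forall i j, w i j = w j i.
Hypothesis w_neq0 : forall i j, e i j -> w i j != 0.

Definition wadj i j := if e i j then w i j else 0.

Lemma diagonal_completion (x y : 'I_n -> R) :
  (forall i, x i * y i = 0) ->
  (forall i, x i = 0 -> \sum_j wadj i j * x j = 0) ->
  (forall i, y i = 0 -> \sum_j wadj i j * y j = 0) ->
  exists2 A, in_SG e A & A *m \col_i x i = 0 /\ A *m \col_i y i = 0.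
Proof.
move=> xy rx ry.
pose d i := if x i != 0 then - (\sum_j wadj i j * x j) / x i
            else - (\sum_j wadj i j * y j) / y i.
pose A := \matrix_(i, j) if i == j then d i else wadj i j.
have A_mul (z : 'I_n -> R) i :
    (A *m \col_j z j) i 0 = d i * z i + \sum_j wadj i j * z j.
  rewrite mxE (bigD1 i) //= [X in _ = _ + X](bigD1 i) //= !mxE eqxx /wadj e_irr.
  rewrite mul0r add0r; congr (_ + _); apply: eq_bigr => j /negbTE ji.
  by rewrite !mxE eq_sym ji.
exists A; first split.
- apply/matrixP => i j; rewrite !mxE eq_sym.
  by have [->//|_] := eqVneq j i; rewrite /wadj e_sym w_sym.
- move=> i j /negbTE ij; rewrite mxE ij /wadj.
  by case: ifP => [/w_neq0 ->|_] //; rewrite eqxx.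
split; apply/matrixP => i k; rewrite ord1 A_mul mxE /d.
  have [xi0|xi] := eqVneq (x i) 0; first by rewrite xi0 mulr0 add0r rx.
  by rewrite /= divfK // addNr.
have [yi0|yi] := eqVneq (y i) 0; first by rewrite yi0 mulr0 add0r ry.
have -> : x i = 0.
  by apply/eqP; move/eqP: (xy i); rewrite mulf_eq0 (negbTE yi) orbF.
by rewrite eqxx /= divfK // addNr.
Qed.

Definition balanced c (x : 'I_n -> R) :=
  [/\ forall i j, avoid e c i j -> x i = x j, x c = 0 & \sum_j wadj c j * x j = 0].

Lemma balanced_rowsum c x :
  balanced c x -> forall i, x i = 0 -> \sum_j wadj i j * x j = 0.
Proof.
case=> x_const xc rc i xi; have [-> // | ic] := eqVneq i c.
apply: big1 => j _; rewrite /wadj; case: ifP => [eij|_]; last by rewrite mul0r.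
have [->|jc] := eqVneq j c; first by rewrite xc mulr0.
by rewrite -(x_const i j) ?xi ?mulr0 //= eij ic jc.
Qed.

Lemma balanced_pair_not_GSSP c c' x y :
  balanced c x -> balanced c' y -> y c = 0 -> (forall i, x i * y i = 0) ->
  (exists i, x i != 0) -> (exists i, y i != 0) -> ~ in_GSSP R e.
Proof.
move=> bx b'y yc xy x_neq0 y_neq0 e_GSSP.
have [A A_SG [Ax Ay]] :=
  diagonal_completion xy (balanced_rowsum bx) (balanced_rowsum b'y).
apply: (null_pair_not_SSP _ Ax Ay _ x_neq0 y_neq0 (e_GSSP A A_SG)).
  by case: A_SG.
move=> i j; have [<- _ | ij] := eqVneq i j; first exact: xy.
case: A_SG => _ -> // /= eij; have [x_const xc _] := bx.
have [->|xi] := eqVneq (x i) 0; first by rewrite mul0r.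
have [->|yj] := eqVneq (y j) 0; first by rewrite mulr0.
have ic : i != c by apply: contraNneq xi => ->; rewrite xc.
have jc : j != c by apply: contraNneq yj => ->; rewrite yc.
by rewrite (x_const i j) ?xy //= eij ic jc.
Qed.

Definition comp_ind c u j : R := if connect (avoid e c) u j then 1 else 0.

Definition comp_weight c u := \sum_j wadj c j * comp_ind c u j.

Lemma balanced_comp_comb c a b (alpha beta : R) : a != c -> b != c ->
  alpha * comp_weight c a + beta * comp_weight c b = 0 ->
  balanced c (fun j => alpha * comp_ind c a j + beta * comp_ind c b j).
Proof.
move=> ac bc weight0; split.
- move=> i j /(same_connect1r (connect_induced_sym e_sym _)) same_ij.
  by rewrite /comp_ind !same_ij.
- have off_c u : u != c -> comp_ind c u c = 0.
    move=> uc; rewrite /comp_ind; case: ifP => // uc_linked.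
    by have := connect_induced_mem (P := predC1 c) uc uc_linked; rewrite /= eqxx.
  by rewrite !off_c // !mulr0 addr0.
rewrite -[RHS]weight0 /comp_weight !mulr_sumr -big_split /=.
by apply: eq_bigr => j _; rewrite mulrDr ![wadj c j * (_ * _)]mulrCA.
Qed.

Lemma comp_comb_support c a b (alpha beta : R) j :
  alpha * comp_ind c a j + beta * comp_ind c b j != 0 ->
  connect (avoid e c) a j || connect (avoid e c) b j.
Proof. by rewrite /comp_ind; do 2 case: ifP => //; rewrite !mulr0 addr0 eqxx. Qed.

Lemma balanced_in_comps c a b : a != c -> b != c ->
  ~~ connect (avoid e c) a b \/ comp_weight c a = 0 ->
  exists x, [/\ balanced c x, exists i, x i != 0 &
    forall j, x j != 0 -> connect (avoid e c) a j || connect (avoid e c) b j].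
Proof.
move=> ac bc unlinked_or_null.
pose comb alpha beta j := alpha * comp_ind c a j + beta * comp_ind c b j.
suff [alpha [beta [comb0 [i combi]]]] : exists alpha beta,
    alpha * comp_weight c a + beta * comp_weight c b = 0 /\
    exists i, comb alpha beta i != 0.
  exists (comb alpha beta); split; [exact: balanced_comp_comb | by exists i |].
  exact: comp_comb_support.
have comp_self u : comp_ind c u u = 1 by rewrite /comp_ind connect0.
have [wa0|wa] := eqVneq (comp_weight c a) 0.
  exists 1, 0; rewrite wa0 !mul0r mulr0 addr0; split=> //.
  by exists a; rewrite /comb comp_self mulr1 mul0r addr0 oner_neq0.
have [wb0|wb] := eqVneq (comp_weight c b) 0.
  exists 0, 1; rewrite wb0 !mul0r mulr0 addr0; split=> //.
  by exists b; rewrite /comb comp_self mulr1 mul0r add0r oner_neq0.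
have nab : ~~ connect (avoid e c) b a.
  rewrite (connect_induced_sym e_sym).
  by case: unlinked_or_null => // wa0; rewrite wa0 eqxx in wa.
exists (comp_weight c b), (- comp_weight c a).
split; first by rewrite mulrC mulNr addrN.
by exists a; rewrite /comb comp_self /comp_ind (negbTE nab) mulr1 mulr0 addr0.
Qed.

Lemma comp_weight_pair c a b : e c a -> e c b -> a != b ->
  connect (avoid e c) a b ->
  (forall j, e c j -> connect (avoid e c) a j -> j = a \/ j = b) ->
  comp_weight c a = w c a + w c b.
Proof.
move=> eca ecb ab lab only_ab.
rewrite /comp_weight (bigD1 a) //= (bigD1 b) /=; last by rewrite eq_sym.
rewrite big1 => [|j /andP[ja jb]].
  by rewrite /wadj /comp_ind eca ecb connect0 lab !mulr1 addr0.
rewrite /wadj /comp_ind; case: ifP => [ecj|_]; last by rewrite mul0r.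
case: ifP => [laj|_]; last by rewrite mulr0.
by case: (only_ab j ecj laj) => jab; rewrite jab eqxx in ja jb.
Qed.

End Weights.

Section FlipWeight.
Variables (R : nzRingType) (n : nat).
Local Open Scope ring_scope.

Definition flip_weight (c : 'I_n) (B : seq 'I_n) i j : R :=
  if ((i == c) && (j \in B)) || ((j == c) && (i \in B)) then -1 else 1.

Lemma flip_weight_sym c B i j : flip_weight c B i j = flip_weight c B j i.
Proof. by rewrite /flip_weight orbC. Qed.

Lemma flip_weight_neq0 c B i j : flip_weight c B i j != 0.
Proof. by rewrite /flip_weight; case: ifP; rewrite ?oppr_eq0 oner_eq0. Qed.

Lemma flip_weightE c B u :
  u != c -> flip_weight c B c u = if u \in B then -1 else 1.
Proof. by move=> uc; rewrite /flip_weight eqxx (negbTE uc) orbF. Qed.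

End FlipWeight.

Lemma two_unlinked_pairs (T : finType) (r : rel T) (N : {set T}) : symmetric r ->
  (forall x y u, x \in N -> y \in N -> u \in N ->
     x != y -> x != u -> y != u -> r x y -> r x u -> False) ->
  3 < #|N| -> exists a b c d, [/\ [&& a \in N, b \in N, c \in N & d \in N],
    a != b, c != d & ~~ [|| r a c, r a d, r b c | r b d]].
Proof.
move=> r_sym no_cherry N_gt3.
have [a aN] : exists a, a \in N by apply/card_gt0P; apply: leq_trans N_gt3.
have /card_gt2P[b [c [d [[bN cN dN] [bc cd db]]]]] : 2 < #|N :\ a|.
  by move: N_gt3; rewrite (cardsD1 a N) aN add1n ltnS.
move: bN cN dN; rewrite !in_setD1 => /andP[ba bN] /andP[ca cN] /andP[da dN].
have [ab ac ad] : [/\ a != b, a != c & a != d] by split; rewrite eq_sym.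
have [cb dc bd] : [/\ c != b, d != c & b != d] by split; rewrite eq_sym.
have lone x y u : x \in N -> y \in N -> u \in N -> x != y -> x != u -> y != u ->
    r x y -> r x u = false /\ r y u = false.
  move=> xN yN uN xy xu yu rxy; split; apply/negP => rxu.
    exact: no_cherry xN yN uN xy xu yu rxy rxu.
  by apply: no_cherry yN xN uN _ yu xu _ rxu; rewrite 1?eq_sym // r_sym.
(* A linked pair is linked to no other element, so it can serve as a pair. *)
have [rac|nac] := boolP (r a c).
  exists a, c, b, d; rewrite aN bN cN dN.
  by have [[-> ->] [-> ->]] := (lone a c b aN cN bN ac ab cb rac,
    lone a c d aN cN dN ac ad cd rac).
have [rad|nad] := boolP (r a d).
  exists a, d, b, c; rewrite aN bN cN dN.
  by have [[-> ->] [-> ->]] := (lone a d b aN dN bN ad ab db rad,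
    lone a d c aN dN cN ad ac dc rad).
have [rbc|nbc] := boolP (r b c).
  exists b, c, a, d; rewrite aN bN cN dN.
  by have [[-> ->] [-> ->]] := (lone b c a bN cN aN bc ba ca rbc,
    lone b c d bN cN dN bc bd cd rbc).
have [rbd|nbd] := boolP (r b d).
  exists b, d, a, c; rewrite aN bN cN dN.
  by have [[-> ->] [-> ->]] := (lone b d a bN dN aN bd ba da rbd,
    lone b d c bN dN cN bd bc dc rbd).
exists a, b, c, d; rewrite aN bN cN dN.
by rewrite (negbTE nac) (negbTE nad) (negbTE nbc) (negbTE nbd).
Qed.

Lemma two_outside (T : finType) (N : {set T}) (P : pred T) : 2 < #|N| ->
  (forall x y, x \in N -> y \in N -> x != y -> P x -> P y -> False) ->
  exists a b, [/\ a \in N, b \in N, a != b, ~~ P a & ~~ P b].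
Proof.
move=> /card_gt2P[x [y [z [[xN yN zN] [xy yz zx]]]]] P_once.
have [Px|nPx] := boolP (P x).
  exists y, z; split=> //; apply/negP => P_.
  - by apply: P_once xN yN xy Px P_.
  - by apply: P_once zN xN zx P_ Px.
have [Py|nPy] := boolP (P y); last by exists x, y.
exists x, z; split=> //; first by rewrite eq_sym.
by apply/negP => Pz; apply: P_once yN zN yz Py Pz.
Qed.

Section Unicyclic.
Variables (R : realType) (n : nat) (e : rel 'I_n).
Hypothesis e_sym : symmetric e.
Hypothesis e_irr : irreflexive e.
Variable s : seq 'I_n.
Hypothesis s_cycle : is_cycle e s.
Hypothesis s_unique : forall t, is_cycle e t -> cycle_edges t = cycle_edges s.
Local Open Scope ring_scope.

Lemma nbr_neq v u : e v u -> u != v.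
Proof. by apply: contraTneq => ->; rewrite e_irr. Qed.

Lemma nbr_pair_balanced (w : 'I_n -> 'I_n -> R) v a b :
  e v a -> e v b -> a != b -> w v a + w v b = 0 ->
  exists x, [/\ balanced e w v x, exists i, x i != 0 &
    forall j, x j != 0 -> connect (avoid e v) a j || connect (avoid e v) b j].
Proof.
move=> eva evb ab wab.
apply: (balanced_in_comps e_sym (nbr_neq eva) (nbr_neq evb)).
have [lab|] := boolP (connect (avoid e v) a b); [right | by left].
rewrite (comp_weight_pair w eva evb ab lab) // => j evj laj.
have [->|ja] := eqVneq j a; [by left | right; apply/eqP; apply: contraT => jb].
by case: (no_three_linked_nbrs e_sym e_irr s_cycle s_unique eva evb evj ab _ _ lab laj);
  rewrite eq_sym.
Qed.

Lemma unlinked_nbr_pairs_not_GSSP (w : 'I_n -> 'I_n -> R) v a b c d :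
  (forall i j, w i j = w j i) -> (forall i j, e i j -> w i j != 0) ->
  [&& e v a, e v b, e v c & e v d] -> a != b -> c != d ->
  ~~ [|| connect (avoid e v) a c, connect (avoid e v) a d,
         connect (avoid e v) b c | connect (avoid e v) b d] ->
  w v a + w v b = 0 -> w v c + w v d = 0 -> ~ in_GSSP R e.
Proof.
move=> w_sym w_neq0 /and4P[eva evb evc evd] ab cd unlinked wab wcd.
have [x [bx x_neq0 x_supp]] := nbr_pair_balanced eva evb ab wab.
have [y [b'y y_neq0 y_supp]] := nbr_pair_balanced evc evd cd wcd.
apply: (balanced_pair_not_GSSP e_sym e_irr w_sym w_neq0 bx b'y _ _ x_neq0 y_neq0).
  by case: b'y.
move=> j; apply/eqP; rewrite mulf_eq0; apply/norP => -[/x_supp xj /y_supp yj].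
have linked_via u u' :
    connect (avoid e v) u j -> connect (avoid e v) u' j -> connect (avoid e v) u u'.
  by move=> uj u'j; rewrite (connect_trans uj) // (connect_induced_sym e_sym).
case/negP: unlinked.
by case/orP: xj => xj; case/orP: yj => yj; rewrite (linked_via _ _ xj yj) ?orbT.
Qed.

Lemma high_degree_not_GSSP v : (3 < degree e v)%N -> ~ in_GSSP R e.
Proof.
rewrite /degree; set N := [set u | e v u] => deg_v.
pose linked := connect (avoid e v).
have no_cherry x y u : x \in N -> y \in N -> u \in N ->
    x != y -> x != u -> y != u -> linked x y -> linked x u -> False.
  by rewrite /N !inE; exact: (no_three_linked_nbrs e_sym e_irr s_cycle s_unique).
have [a [b [c [d [abcdN ab cd unlinked]]]]] :=
  two_unlinked_pairs (connect_induced_sym e_sym _) no_cherry deg_v.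
rewrite !inE in abcdN.
pose w := flip_weight R v [:: b; d].
have wE u : e v u -> w v u = if u \in [:: b; d] then -1 else 1.
  by move/nbr_neq; apply: flip_weightE.
have neq_linked x u : ~~ linked x u -> x != u.
  by apply: contraNneq => ->; apply: connect0.
move: (unlinked) (abcdN); rewrite !negb_or => /and4P[_ nad nbc _] /and4P[eva evb evc evd].
apply: (unlinked_nbr_pairs_not_GSSP (w := w) _ _ abcdN ab cd unlinked).
- exact: flip_weight_sym.
- by move=> i j _; apply: flip_weight_neq0.
- by rewrite !wE // !inE eqxx /= (negbTE ab) (negbTE (neq_linked _ _ nad)) addrN.
have cb : c != b by rewrite eq_sym neq_linked.
by rewrite !wE // !inE eqxx /= (negbTE cd) (negbTE cb) orbT addrN.
Qed.

Lemma off_cycle_not_GSSP v : connected_graph e -> v \notin s ->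
  (2 < degree e v)%N -> ~ in_GSSP R e.
Proof.
move=> e_conn vs deg_v.
have [r [p [q [[rv erp erq pq lpq] npv]]]] :=
  off_cycle_vertex_separated e_sym e_irr s_cycle s_unique e_conn vs.
pose linked := connect (avoid e v).
have linked_once x y : x \in [set u | e v u] -> y \in [set u | e v u] -> x != y ->
    linked x r -> linked y r -> False.
  rewrite !inE => evx evy xy lxr lyr.
  have := off_cycle_nbrs_unlinked e_sym e_irr s_unique vs evx evy xy.
  by rewrite /linked (connect_trans lxr) // (connect_induced_sym e_sym).
have [a [b []]] := two_outside deg_v linked_once.
rewrite !inE => eva evb ab nar nbr.
pose w := flip_weight R r [:: p].
have w_sym i j : w i j = w j i by apply: flip_weight_sym.
have w_neq0 i j : e i j -> w i j != 0 by move=> _; apply: flip_weight_neq0.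
have wpq : w r p + w r q = 0.
  rewrite /w !flip_weightE ?(nbr_neq erp) ?(nbr_neq erq) // !inE eqxx.
  by rewrite eq_sym (negbTE pq) addNr.
have [x [bx x_neq0 x_supp]] := nbr_pair_balanced erp erq pq wpq.
have [y [b'y y_neq0 y_supp]] := balanced_in_comps e_sym (w := w)
  (nbr_neq eva) (nbr_neq evb)
  (or_introl (off_cycle_nbrs_unlinked e_sym e_irr s_unique vs eva evb ab)).
rewrite -/linked in y_supp.
apply: (balanced_pair_not_GSSP e_sym e_irr w_sym w_neq0 bx b'y _ _ x_neq0 y_neq0).
  by apply/eqP; apply: contraT => /y_supp; rewrite (negbTE nar) (negbTE nbr).
have pv : p != v by apply: contraNneq npv => <-; apply: connect0.
move=> j; apply/eqP; rewrite mulf_eq0; apply/norP => -[/x_supp xj /y_supp yj].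
have lpj : linked p j.
  apply: (connect_induced_restrict (P := predC1 r)) => [k lpk|].
    by apply: contraNneq npv => <-.
  by case/orP: xj => // lqj; apply: connect_trans lpq lqj.
have lrj : linked r j := connect_trans (connect_avoid_edge erp rv pv) lpj.
by case/orP: yj => lj; [case/negP: nar | case/negP: nbr];
  rewrite /linked (connect_trans lj) // (connect_induced_sym e_sym).
Qed.

End Unicyclic.

Theorem corollary2p9 (R : realType) (n : nat) (e : rel 'I_n) :
  simple_graph e -> unicyclic e ->
  ((exists v, 4 <= degree e v) \/
   (exists v, degree e v = 3 /\ forall s, is_cycle e s -> v \notin s)) ->
  ~ in_GSSP R e.
Proof.
move=> [e_sym e_irr] [e_conn [s [s_cycle s_unique]]] [[v deg_v] | [v [deg_v v_off]]].
  exact: (high_degree_not_GSSP (R := R) e_sym e_irr s_cycle s_unique deg_v).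
apply: (off_cycle_not_GSSP e_sym e_irr s_cycle s_unique e_conn (v_off s s_cycle)).
by rewrite deg_v.
Qed.
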